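(* Let $S$ be an inverse semigroup, regarded as an algebraic structure in the language $\mathcal{L}=\{\cdot,{}^{-1}\}\cup\{s\mid s\in S\}$. Suppose $S$ contains two idempotents $e,f$ that are incomparable with respect to the natural order on idempotents (i.e. $ef\neq e$ and $fe\neq f$). Then $S$ is not an equational domain in the language $\mathcal{L}$.
   Context: A semigroup $S$ is inverse if for every $s\in S$ there is a unique $s^{-1}\in S$ with $ss^{-1}s=s$ and $s^{-1}ss^{-1}=s^{-1}$; its idempotents commute. The natural order on idempotents is $e\le f \iff ef=e$. The language $\mathcal{L}$ consists of multiplication, inversion, and a constant symbol for every element of $S$. For variables $x_1,\dots,x_n$, a term of $\mathcal{L}$ is a finite product of variables raised to integer powers and constants from $S$. An equation is an equality of two terms; a system of equations is an arbitrary set of equations in $x_1,\dots,x_n$. A set $Y\subseteq S^n$ is algebraic over $S$ if it is the set of all tuples in $S^n$ satisfying all equations of some system. $S$ is an equational domain (in $\mathcal{L}$) if for every $n$, every finite union of algebraic subsets of $S^n$ is algebraic. *)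

From mathcomp Require Import all_boot.
From Stdlib Require Import List.

Set Implicit Arguments.
Unset Strict Implicit.

Definition is_inverse_semigroup (S : Type) (mul : S -> S -> S) (inv : S -> S) : Prop :=
  (forall a b c, mul a (mul b c) = mul (mul a b) c) /\
  (forall s, mul (mul s (inv s)) s = s /\ mul (mul (inv s) s) (inv s) = inv s) /\
  (forall s t, mul (mul s t) s = s -> mul (mul t s) t = t -> t = inv s).

Inductive term (S : Type) (n : nat) : Type :=
| TVar : 'I_n -> term S n
| TConst : S -> term S n
| TMul : term S n -> term S n -> term S n
| TInv : term S n -> term S n.

Fixpoint eval (S : Type) (mul : S -> S -> S) (inv : S -> S) (n : nat)
  (x : 'I_n -> S) (t : term S n) : S :=
  match t with
  | TVar i => x i
  | TConst s => s
  | TMul t1 t2 => mul (eval mul inv x t1) (eval mul inv x t2)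
  | TInv t1 => inv (eval mul inv x t1)
  end.

Definition equation (S : Type) (n : nat) : Type := (term S n * term S n)%type.

Definition algebraic (S : Type) (mul : S -> S -> S) (inv : S -> S) (n : nat)
  (Y : ('I_n -> S) -> Prop) : Prop :=
  exists E : equation S n -> Prop,
    forall x : 'I_n -> S,
      Y x <-> (forall q, E q -> eval mul inv x q.1 = eval mul inv x q.2).

Definition equational_domain (S : Type) (mul : S -> S -> S) (inv : S -> S) : Prop :=
  forall (n : nat) (Ys : list (('I_n -> S) -> Prop)),
    (forall Y, In Y Ys -> algebraic mul inv Y) ->
    algebraic mul inv (fun x => exists Y, In Y Ys /\ Y x).

(* For tuples x, y of idempotents and every term t, the values t(x), t(y),
   t(xy) have the shape a c, b c, a b c with a, b idempotent and c in S^1;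
   products keep this shape because an idempotent moves past c as its
   conjugate c a c^-1, and so do inverses. Then t(xy) = t(x) t(x)^-1 t(y), so
   every equation satisfied by e and by f is satisfied by ef. Since ef is
   neither e nor f (idempotents commute), the union {e} U {f} of two algebraic
   sets is not algebraic. *)

From mathcomp Require Import all_boot.
From Stdlib Require Import List.

Set Implicit Arguments.
Unset Strict Implicit.

Section InverseSemigroup.

Variables (S : Type) (mul : S -> S -> S) (inv : S -> S).
Hypothesis isg : is_inverse_semigroup mul inv.

Local Notation "x · y" := (mul x y) (at level 40, left associativity).
Local Notation idem e := (e · e = e).

Lemma mulA : associative mul.
Proof. by case: isg. Qed.

Lemma mul_inv_mul s : s · inv s · s = s.
Proof. by case: isg => _ [/(_ s) []]. Qed.

Lemma inv_mul_inv s : inv s · s · inv s = inv s.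
Proof. by case: isg => _ [/(_ s) []]. Qed.

Lemma inv_unique s t : s · t · s = s -> t · s · t = t -> t = inv s.
Proof. by case: isg => _ [_]; apply. Qed.

Lemma mul_inv_mulr z s : z · s · inv s · s = z · s.
Proof. by rewrite -!mulA (mulA s) mul_inv_mul. Qed.

Lemma inv_mul_invr z s : z · inv s · s · inv s = z · inv s.
Proof. by rewrite -!mulA (mulA (inv s)) inv_mul_inv. Qed.

Lemma invK : involutive inv.
Proof. by move=> s; symmetry; apply: inv_unique; rewrite ?inv_mul_inv ?mul_inv_mul. Qed.

Lemma inv_idem e : idem e -> inv e = e.
Proof. by move=> ee; symmetry; apply: inv_unique; rewrite !ee. Qed.

Lemma idem_mul_inv s : idem (s · inv s).
Proof. by rewrite mulA mul_inv_mul. Qed.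

Lemma idem_inv_mul s : idem (inv s · s).
Proof. by rewrite mulA inv_mul_inv. Qed.

Lemma mul_idemr e z : idem e -> z · e · e = z · e.
Proof. by move=> ee; rewrite -mulA ee. Qed.

(* [inv (e f)] is fixed by [x |-> f x e], which makes it idempotent;
   hence so is its inverse [e f]. *)
Lemma idemM e f : idem e -> idem f -> idem (e · f).
Proof.
move=> ee ff; set x := inv (e · f).
have xE : f · x · e = x.
  apply: inv_unique; rewrite !mulA (mul_idemr _ ff) (mul_idemr _ ee).
  - by rewrite -(mulA _ e f) mul_inv_mul.
  - by rewrite -(mulA _ e f) -(mulA f x) -(mulA f _ x) inv_mul_inv.
have xx : idem x.
  by rewrite -[in LHS]xE !mulA -(mulA _ e f) -(mulA f x) -(mulA f _ x) inv_mul_inv xE.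
by rewrite -[e · f]invK -/x (inv_idem xx).
Qed.

Lemma idemC e f : idem e -> idem f -> e · f = f · e.
Proof.
move=> ee ff; rewrite -[e · f](inv_idem (idemM ee ff)).
symmetry; apply: inv_unique; rewrite !mulA (mul_idemr _ ff) (mul_idemr _ ee).
- by rewrite -(mulA _ e f) idemM.
- by rewrite -(mulA _ f e) idemM.
Qed.

Lemma invM x y : inv (x · y) = inv y · inv x.
Proof.
have yx := idemC (idem_mul_inv y) (idem_inv_mul x).
symmetry; apply: inv_unique; rewrite !mulA.
- rewrite -(mulA x y) -(mulA _ (inv x) x) -(mulA x (y · inv y)) yx.
  by rewrite !mulA mul_inv_mul mul_inv_mulr.
- rewrite -(mulA (inv y) (inv x)) -(mulA _ y (inv y)) -(mulA (inv y) (inv x · x)) -yx.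
  by rewrite !mulA inv_mul_inv inv_mul_invr.
Qed.

Definition conj (s a : S) := s · a · inv s.

Lemma conj_mul s a : idem a -> conj s a · s = s · a.
Proof. by move=> aa; rewrite /conj -mulA -(mulA s a) (idemC aa (idem_inv_mul s)) !mulA mul_inv_mul. Qed.

Lemma conj_mulr z s a : idem a -> z · s · a · inv s · s = z · s · a.
Proof.
move=> aa; have -> : z · s · a · inv s · s = z · (conj s a · s) by rewrite !mulA.
by rewrite conj_mul ?mulA.
Qed.

Lemma idem_conj s a : idem a -> idem (conj s a).
Proof. by move=> aa; rewrite [in LHS]/conj !mulA (conj_mul _ aa) (mul_idemr _ aa). Qed.

Lemma conjM s a b : idem a -> conj s (a · b) = conj s a · conj s b.
Proof. by move=> aa; rewrite [conj s b]/conj !mulA (conj_mul _ aa) /conj !mulA. Qed.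

(* Elements of the monoid S^1 are encoded as [option S], [None] being the
   adjoined identity. *)
Definition mulo (x : S) (oc : option S) : S := if oc is Some c then x · c else x.
Definition omul (oc od : option S) : option S :=
  if oc is Some c then Some (mulo c od) else od.
Definition oinv (oc : option S) : option S := omap inv oc.
Definition oconj (oc : option S) (a : S) : S := if oc is Some c then conj c a else a.

Lemma idem_oconj oc a : idem a -> idem (oconj oc a).
Proof. by case: oc => [c|] //= /idem_conj. Qed.

Lemma oconjM oc a b : idem a -> oconj oc (a · b) = oconj oc a · oconj oc b.
Proof. by case: oc => [c|] //= /conjM. Qed.

Lemma mulo_mul x oc a od :
  idem a -> mulo x oc · mulo a od = mulo (x · oconj oc a) (omul oc od).
Proof.
move=> aa; case: oc => [c|] /=; last by case: od => [d|] //=; rewrite mulA.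
by case: od => [d|] /=; rewrite !mulA conj_mulr.
Qed.

Lemma inv_mulo a oc : idem a -> inv (mulo a oc) = mulo (oconj (oinv oc) a) (oinv oc).
Proof.
case: oc => [c|] aa /=; last exact: inv_idem.
by rewrite invM (inv_idem aa) conj_mul.
Qed.

(* [u = a c], [v = b c] are restrictions of a common [c] in S^1 to idempotents
   [a], [b], and [w = a b c] is their meet. *)
Definition meet_triple (u v w : S) : Prop :=
  exists a b oc, [/\ idem a, idem b, u = mulo a oc, v = mulo b oc & w = mulo (a · b) oc].

Lemma meet_tripleE u v w : meet_triple u v w -> w = u · inv u · v.
Proof.
case=> a [b [[c|] [aa bb -> -> ->]]] /=; last by rewrite inv_idem // aa.
have cc := idem_mul_inv c.
rewrite invM (inv_idem aa) !mulA -(mulA a c) -(mulA a _ a) (idemC cc aa) !mulA aa.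
by rewrite -(mulA a c) -(mulA a _ b) (idemC cc bb) !mulA mul_inv_mulr.
Qed.

Lemma meet_triple_refl s : meet_triple s s s.
Proof.
exists (s · inv s), (s · inv s), (Some s).
by split; rewrite /= ?idem_mul_inv ?mul_inv_mul.
Qed.

Lemma meet_tripleM u1 v1 w1 u2 v2 w2 :
  meet_triple u1 v1 w1 -> meet_triple u2 v2 w2 ->
  meet_triple (u1 · u2) (v1 · v2) (w1 · w2).
Proof.
case=> a1 [b1 [oc [aa1 bb1 -> -> ->]]] [a2 [b2 [od [aa2 bb2 -> -> ->]]]].
have aa2' := idem_oconj oc aa2; have bb2' := idem_oconj oc bb2.
exists (a1 · oconj oc a2), (b1 · oconj oc b2), (omul oc od).
split; rewrite ?mulo_mul ?idemM //; congr mulo.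
by rewrite oconjM // !mulA -(mulA a1 b1) (idemC bb1 aa2') !mulA.
Qed.

Lemma meet_tripleV u v w : meet_triple u v w -> meet_triple (inv u) (inv v) (inv w).
Proof.
case=> a [b [oc [aa bb -> -> ->]]].
exists (oconj (oinv oc) a), (oconj (oinv oc) b), (oinv oc).
by split; rewrite ?idem_oconj ?inv_mulo ?oconjM ?idemM.
Qed.

Lemma meet_triple_eval n (x y z : 'I_n -> S) :
  (forall i, meet_triple (x i) (y i) (z i)) ->
  forall t : term S n,
    meet_triple (eval mul inv x t) (eval mul inv y t) (eval mul inv z t).
Proof.
move=> xyz; elim=> [i|c|t1 IH1 t2 IH2|t IH] /=.
- exact: xyz.
- exact: meet_triple_refl.
- exact: meet_tripleM.
- exact: meet_tripleV.
Qed.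

Lemma eval_eq_idem_mul n (x y : 'I_n -> S) (t1 t2 : term S n) :
  (forall i, idem (x i)) -> (forall i, idem (y i)) ->
  eval mul inv x t1 = eval mul inv x t2 -> eval mul inv y t1 = eval mul inv y t2 ->
  eval mul inv (fun i => x i · y i) t1 = eval mul inv (fun i => x i · y i) t2.
Proof.
move=> xx yy Ex Ey.
have xyz i : meet_triple (x i) (y i) (x i · y i) by exists (x i), (y i), None.
by rewrite !(meet_tripleE (meet_triple_eval xyz _)) Ex Ey.
Qed.

End InverseSemigroup.

Lemma algebraic_point (S : Type) (mul : S -> S -> S) (inv : S -> S) n (p : 'I_n -> S) :
  algebraic mul inv (fun x => forall i, x i = p i).
Proof.
exists (fun q => exists i, q = (TVar S i, TConst n (p i))) => x; split.
- by move=> xp _ [i ->] /=.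
- by move=> Ex i; apply: (Ex (TVar S i, TConst n (p i))); exists i.
Qed.

Theorem lemma3 (S : Type) (mul : S -> S -> S) (inv : S -> S) :
  is_inverse_semigroup mul inv ->
  (exists e f : S, mul e e = e /\ mul f f = f /\ mul e f <> e /\ mul f e <> f) ->
  ~ equational_domain mul inv.
Proof.
move=> isg [e [f [ee [ff [nef nfe]]]]] ED.
pose const (g : S) : 'I_1 -> S := fun _ => g.
pose point (g : S) (x : 'I_1 -> S) := forall i, x i = const g i.
have points_algebraic Y : In Y [:: point e; point f] -> algebraic mul inv Y.
  by move=> /= [<-|[<-|[]]]; apply: algebraic_point.
have [E solE] := ED 1 _ points_algebraic.
have solE_in g Y : In Y [:: point e; point f] -> Y (const g) ->
    forall q, E q -> eval mul inv (const g) q.1 = eval mul inv (const g) q.2.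
  by move=> inY Yg; apply/solE; exists Y.
have [Y [inY efY]] : exists Y, In Y [:: point e; point f] /\ Y (const (mul e f)).
  apply/solE => q Eq; apply: (eval_eq_idem_mul isg) => //.
  - by apply: (solE_in e (point e)) => /=; auto.
  - by apply: (solE_in f (point f)) => /=; auto.
case: inY efY => [<-|[<-|[]]] /(_ ord0) /=; first exact: nef.
by rewrite (idemC isg ee ff).
Qed.
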